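(* Let $q\ge3$ be an integer, $0\le\beta<1$, and let $\mathcal{G}$ be a family of finite graphs for which the function $\delta$ defined by $\delta(d)=\frac{2(1-\beta)}{q-1-(1-\beta)d}$ if $d\le\frac{q-1}{1-\beta}-2$ and $\delta(d)=1$ otherwise, is a contraction function. Then there exist an integer $\theta\ge2$ and a constant $C>0$ such that for every $G=(V,E)\in\mathcal{G}$ with $n=|V|$, every $v\in V$, every integer $L\ge C\log n$, and every self-avoiding walk $(v,v_1,\dots,v_{\theta L})$ in $G$, there is an index $j$ with $L<j\le\theta L$ such that $v_j$ is a low-degree vertex. Consequently, in the self-avoiding walk tree of $G$ rooted at $v$ there is a set $S$ of low-degree vertices at distance in $(L,\theta L]$ from the root such that every walk from the root of length $\theta L$ intersects $S$.
   Context: A vertex $u$ of $G$ is low-degree if $\deg_G(u)<\frac{q-1}{1-\beta}-2$, high-degree otherwise. The self-avoiding walk tree of $G$ rooted at $v$ has as nodes the self-avoiding walks in $G$ starting at $v$, the root being $(v)$ and the children of $(v,v_1,\dots,v_k)$ being its one-edge extensions $(v,v_1,\dots,v_k,v_{k+1})$; each node is identified with the last vertex of its walk. Contraction function: $\mathsf{SAW}(v,\ell)$ is the set of self-avoiding walks $(v,v_1,\dots,v_\ell)$ with $\ell$ edges from $v$; $\mathcal{E}_\delta(v,\ell)=\sum_{(v,v_1,\dots,v_\ell)\in\mathsf{SAW}(v,\ell)}\prod_{i=1}^\ell\delta(\deg_G(v_i))$; $\delta:\mathbb{N}\to\mathbb{R}^+$ is a contraction function for $\mathcal{G}$ if there are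 constants $C>0$, $0<\gamma<1$ with $\mathcal{E}_\delta(v,\ell)<n^C\gamma^\ell$ for every $G=(V,E)\in\mathcal{G}$, $n=|V|$, every vertex $v$ and every $\ell\ge1$. *)

From Stdlib Require Import Reals Lra Lia Arith List.
Import ListNotations.
Open Scope R_scope.

Record graph := Graph {
  gn : nat;                                   (* n = |V|, V = {0,...,n-1} *)
  gadj : nat -> nat -> bool;
  gadj_range : forall u w, gadj u w = true -> (u < gn)%nat /\ (w < gn)%nat;
  gadj_sym : forall u w, gadj u w = gadj w u;
  gadj_irrefl : forall u, gadj u u = false
}.

Definition deg (G : graph) (u : nat) : nat :=
  length (filter (gadj G u) (seq 0 (gn G))).

Fixpoint walkb (G : graph) (w : list nat) : bool :=
  match w with
  | x :: ((y :: _) as t) => gadj G x y && walkb G t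
  | _ => true
  end.

Fixpoint nodupb (w : list nat) : bool :=
  match w with
  | [] => true
  | x :: t => negb (existsb (Nat.eqb x) t) && nodupb t
  end.

Definition is_saw (G : graph) (v l : nat) (w : list nat) : Prop :=
  (v < gn G)%nat /\ hd_error w = Some v /\ length w = S l /\
  nodupb w = true /\ walkb G w = true.

Definition sawb (G : graph) (v l : nat) (w : list nat) : bool :=
  Nat.ltb v (gn G) && match w with x :: _ => Nat.eqb x v | [] => false end
  && Nat.eqb (length w) (S l) && nodupb w && walkb G w.

Fixpoint all_lists (n l : nat) : list (list nat) :=
  match l with
  | O => [[]]
  | S l' => flat_map (fun x => map (cons x) (all_lists n l')) (seq 0 n)
  end.

Definition SAW (G : graph) (v l : nat) : list (list nat) :=
  filter (sawb G v l) (map (cons v) (all_lists (gn G) l)).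

Definition E_delta (delta : nat -> R) (G : graph) (v l : nat) : R :=
  fold_right Rplus 0
    (map (fun w => fold_right Rmult 1 (map (fun u => delta (deg G u)) (tl w)))
         (SAW G v l)).

Definition contraction_function (F : graph -> Prop) (delta : nat -> R) : Prop :=
  (forall d, 0 < delta d) /\
  exists C gamma : R, 0 < C /\ 0 < gamma < 1 /\
    forall G, F G -> forall v, (v < gn G)%nat -> forall l, (1 <= l)%nat ->
      E_delta delta G v l < Rpower (INR (gn G)) C * gamma ^ l.

Definition delta_qb (q : nat) (beta : R) (d : nat) : R :=
  if Rle_dec (INR d) ((INR q - 1) / (1 - beta) - 2)
  then 2 * (1 - beta) / (INR q - 1 - (1 - beta) * INR d)
  else 1.

Definition low_degree (q : nat) (beta : R) (G : graph) (u : nat) : Prop :=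
  INR (deg G u) < (INR q - 1) / (1 - beta) - 2.

(* A self-avoiding walk (v, v_1, ..., v_{θL}) contributes the product of the δ(deg v_i) to
   E_δ(v, θL).  Every value of δ is at least a = 2(1-β)/(q-1), and δ = 1 exactly on the
   high-degree vertices.  So if v_{L+1}, ..., v_{θL} were all high-degree, the walk alone
   would give E_δ(v, θL) >= a^L, whereas the contraction bound gives
   E_δ(v, θL) < n^C γ^{θL} <= (e γ^θ)^L once L >= C log n.  Choosing θ with e γ^θ <= a
   yields a contradiction.  The set S of the tree statement is the set of prefixes of
   walks ending at such a low-degree vertex. *)
From Stdlib Require Import Reals List.
From Stdlib Require Import Lra Lia Bool Classical.
Import ListNotations.
Open Scope R_scope.

Lemma nodupb_app_l (a b : list nat) : nodupb (a ++ b) = true -> nodupb a = true.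
Proof.
  induction a as [|x a IH]; simpl; auto.
  intros [Hx Ha]%andb_true_iff.
  rewrite IH by exact Ha. rewrite andb_true_r.
  rewrite existsb_app in Hx. destruct (existsb (Nat.eqb x) a); simpl in *; auto.
Qed.

Lemma walkb_app_l G (a b : list nat) : walkb G (a ++ b) = true -> walkb G a = true.
Proof.
  induction a as [|x [|y a] IH]; simpl; auto.
  intros [Hxy Ha]%andb_true_iff. rewrite Hxy. exact (IH Ha).
Qed.

Lemma walkb_vertex_range G (w : list nat) : walkb G w = true -> (2 <= length w)%nat ->
  forall x, In x w -> (x < gn G)%nat.
Proof.
  induction w as [|x [|z w] IH]; simpl; intros Hw Hl y Hy; try lia.
  apply andb_true_iff in Hw as [Hxz Hw].
  destruct (gadj_range G x z Hxz) as [Hx Hz].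
  destruct Hy as [<-|[<-|Hy]]; auto.
  destruct w as [|u w]; [destruct Hy|].
  apply IH; simpl; auto; lia.
Qed.

Lemma in_all_lists n (t : list nat) :
  (forall x, In x t -> (x < n)%nat) -> In t (all_lists n (length t)).
Proof.
  induction t as [|x t IH]; simpl; intros H; auto.
  apply in_flat_map. exists x. split.
  - apply in_seq. specialize (H x (or_introl eq_refl)). lia.
  - apply in_map, IH. auto.
Qed.

Lemma is_saw_in_SAW G v l w : is_saw G v l w -> (1 <= l)%nat -> In w (SAW G v l).
Proof.
  intros (Hv & Hh & Hl & Hnd & Hw) Hl1.
  destruct w as [|x t]; [discriminate|]. injection Hh as ->.
  unfold SAW. apply filter_In. split.
  - apply in_map. injection Hl as <-. apply in_all_lists.
    intros y Hy. apply (walkb_vertex_range G (v :: t)); simpl; auto. lia.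
  - unfold sawb. rewrite Hnd, Hw, Hl, (proj2 (Nat.ltb_lt _ _) Hv), !Nat.eqb_refl.
    reflexivity.
Qed.

Lemma is_saw_firstn G v l w k : is_saw G v l w -> (k <= l)%nat ->
  is_saw G v k (firstn (S k) w).
Proof.
  intros (Hv & Hh & Hl & Hnd & Hw) Hk.
  rewrite <- (firstn_skipn (S k) w) in Hnd, Hw.
  repeat split; auto.
  - destruct w; [discriminate|]. exact Hh.
  - rewrite length_firstn. lia.
  - exact (nodupb_app_l _ _ Hnd).
  - exact (walkb_app_l _ _ _ Hw).
Qed.

Lemma last_firstn_S (w : list nat) j : (j < length w)%nat ->
  last (firstn (S j) w) 0%nat = nth j w 0%nat.
Proof.
  revert j; induction w as [|x w IH]; simpl; intros [|j] Hj; try lia; auto.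
  destruct w as [|y w]; simpl in *; [lia|].
  rewrite <- IH by lia. reflexivity.
Qed.

Lemma sum_list_ge_member (s : list R) x :
  In x s -> (forall y, In y s -> 0 <= y) -> x <= fold_right Rplus 0 s.
Proof.
  induction s as [|y s IH]; simpl; [tauto|]. intros Hx Hs.
  assert (Hsum : 0 <= fold_right Rplus 0 s).
  { clear IH Hx. induction s as [|z s IHs]; simpl; [lra|].
    assert (0 <= z) by (apply Hs; simpl; auto).
    assert (0 <= fold_right Rplus 0 s) by (apply IHs; intros; apply Hs; simpl in *; tauto).
    lra. }
  assert (0 <= y) by auto.
  destruct Hx as [<-|Hx]; [lra|].
  assert (x <= fold_right Rplus 0 s) by auto. lra.
Qed.

Lemma prod_list_pos (f : nat -> R) s : (forall x, 0 < f x) ->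
  0 < fold_right Rmult 1 (map f s).
Proof. intros H; induction s; simpl; [lra|]. apply Rmult_lt_0_compat; auto. Qed.

Lemma prod_list_app (f : nat -> R) a b : fold_right Rmult 1 (map f (a ++ b)) =
  fold_right Rmult 1 (map f a) * fold_right Rmult 1 (map f b).
Proof. induction a; simpl; [lra|]. rewrite IHa; lra. Qed.

Lemma prod_list_ge_pow (f : nat -> R) a s : 0 <= a -> (forall x, a <= f x) ->
  a ^ length s <= fold_right Rmult 1 (map f s).
Proof.
  intros Ha H. induction s as [|x s IH]; simpl; [lra|].
  apply Rmult_le_compat; auto. apply pow_le; auto.
Qed.

Lemma prod_list_eq1 (f : nat -> R) s : (forall x, In x s -> f x = 1) ->
  fold_right Rmult 1 (map f s) = 1.
Proof.
  induction s as [|x s IH]; simpl; intros H; [lra|].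
  rewrite H, IH; auto; lra.
Qed.

Lemma prod_list_ge_pow_prefix (f : nat -> R) a L s :
  0 <= a -> (forall x, a <= f x) -> (L <= length s)%nat ->
  (forall i, (L <= i < length s)%nat -> f (nth i s 0%nat) = 1) ->
  a ^ L <= fold_right Rmult 1 (map f s).
Proof.
  intros Ha Hf HL Htail.
  rewrite <- (firstn_skipn L s), prod_list_app, (prod_list_eq1 f (skipn L s)).
  - rewrite Rmult_1_r.
    replace L with (length (firstn L s)) at 1 by (rewrite length_firstn; lia).
    exact (prod_list_ge_pow f a _ Ha Hf).
  - intros y Hy. destruct (In_nth _ _ 0%nat Hy) as [i [Hi <-]].
    rewrite length_skipn in Hi. rewrite nth_skipn. apply Htail. lia.
Qed.

Definition walk_weight (delta : nat -> R) (G : graph) (w : list nat) : R :=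
  fold_right Rmult 1 (map (fun u => delta (deg G u)) (tl w)).

Lemma walk_weight_le_E_delta delta G v l w : (forall d, 0 < delta d) ->
  is_saw G v l w -> (1 <= l)%nat -> walk_weight delta G w <= E_delta delta G v l.
Proof.
  intros Hpos Hw Hl. apply sum_list_ge_member.
  - exact (in_map (walk_weight delta G) _ _ (is_saw_in_SAW G v l w Hw Hl)).
  - intros y (w' & <- & _)%in_map_iff. left. apply prod_list_pos. auto.
Qed.

Section Delta.

Variables (q : nat) (beta : R).
Hypotheses (Hq : (3 <= q)%nat) (Hbeta : 0 <= beta < 1).

Let Hq1 : 2 <= INR q - 1.
Proof. apply (le_INR 3 q) in Hq. simpl in Hq. lra. Qed.

Definition delta_min : R := 2 * (1 - beta) / (INR q - 1).

Lemma delta_min_pos : 0 < delta_min.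
Proof. unfold delta_min. apply Rdiv_lt_0_compat; lra. Qed.

Lemma delta_qb_ge_min d : delta_min <= delta_qb q beta d.
Proof.
  pose proof (pos_INR d) as Hd.
  unfold delta_qb, delta_min. destruct (Rle_dec _ _) as [H|H].
  - assert (Hden : 2 * (1 - beta) <= INR q - 1 - (1 - beta) * INR d).
    { apply Rmult_le_compat_l with (r := 1 - beta) in H; [|lra].
      replace ((1 - beta) * ((INR q - 1) / (1 - beta) - 2))
        with (INR q - 1 - 2 * (1 - beta)) in H by (field; lra).
      lra. }
    assert (0 <= (1 - beta) * INR d) by (apply Rmult_le_pos; lra).
    unfold Rdiv. apply Rmult_le_compat_l; [lra|].
    apply Rinv_le_contravar; lra.
  - apply Rmult_le_reg_r with (INR q - 1); [lra|].
    unfold Rdiv. rewrite Rmult_assoc, Rinv_l by lra. lra.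
Qed.

(* At the threshold degree both branches of [delta_qb] equal 1. *)
Lemma delta_qb_high_degree G u :
  ~ low_degree q beta G u -> delta_qb q beta (deg G u) = 1.
Proof.
  unfold low_degree, delta_qb. intros Hhigh.
  destruct (Rle_dec _ _) as [Hle|Hle]; [|reflexivity].
  replace (INR (deg G u)) with ((INR q - 1) / (1 - beta) - 2) by lra.
  field; lra.
Qed.

Lemma walk_weight_ge_min_pow G v L theta w :
  is_saw G v (theta * L) w -> (L <= theta * L)%nat ->
  (forall j, (L < j <= theta * L)%nat -> ~ low_degree q beta G (nth j w 0%nat)) ->
  delta_min ^ L <= walk_weight (delta_qb q beta) G w.
Proof.
  intros (_ & _ & Hl & _ & _) HL Hhigh.
  destruct w as [|x t]; [discriminate|]. injection Hl as Hl.
  apply prod_list_ge_pow_prefix.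
  - left; exact delta_min_pos.
  - intro; apply delta_qb_ge_min.
  - simpl; lia.
  - simpl; intros i Hi. apply delta_qb_high_degree, (Hhigh (S i)). lia.
Qed.

End Delta.

Lemma exp_INR_pow (L : nat) : exp (INR L) = exp 1 ^ L.
Proof. rewrite <- Rpower_pow by apply exp_pos. unfold Rpower. rewrite ln_exp. f_equal; ring. Qed.

(* [Rpower x C] is [exp (C * ln x)], so no positivity of [x] is needed. *)
Lemma Rpower_mul_pow_le (x C g a : R) (theta L : nat) :
  C * ln x <= INR L -> 0 <= g -> g ^ theta <= a / exp 1 ->
  Rpower x C * g ^ (theta * L) <= a ^ L.
Proof.
  intros HCL Hg Hga. unfold Rpower.
  assert (Hexp : exp (C * ln x) <= exp 1 ^ L).
  { rewrite <- exp_INR_pow.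
    destruct (Rle_lt_or_eq_dec _ _ HCL) as [H| ->]; [left; apply exp_increasing|]; lra. }
  pose proof (pow_le g theta Hg) as Hgt.
  pose proof (exp_pos 1) as He.
  assert (Hea : exp 1 * g ^ theta <= a).
  { apply Rmult_le_compat_l with (r := exp 1) in Hga; [|lra].
    replace (exp 1 * (a / exp 1)) with a in Hga by (field; lra). exact Hga. }
  rewrite pow_mult.
  apply Rle_trans with ((exp 1 * g ^ theta) ^ L).
  - rewrite Rpow_mult_distr. apply Rmult_le_compat_r; [apply pow_le; lra | exact Hexp].
  - apply pow_incr. split; [apply Rmult_le_pos|]; lra.
Qed.

Lemma exists_pow_le (g b : R) : 0 <= g < 1 -> 0 < b ->
  exists theta : nat, (2 <= theta)%nat /\ g ^ theta <= b.
Proof.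
  intros Hg Hb.
  destruct (pow_lt_1_zero g ltac:(rewrite Rabs_right; lra) b Hb) as [N HN].
  exists (Nat.max N 2). split; [lia|].
  specialize (HN (Nat.max N 2) ltac:(lia)).
  rewrite Rabs_right in HN; [lra|]. apply Rle_ge, pow_le; lra.
Qed.

Lemma low_degree_in_window (q : nat) (beta C g : R) (theta : nat) G v L :
  (3 <= q)%nat -> 0 <= beta < 1 -> (forall d, 0 < delta_qb q beta d) ->
  (1 <= L)%nat -> (1 <= theta)%nat -> 0 <= g -> g ^ theta <= delta_min q beta / exp 1 ->
  C * ln (INR (gn G)) <= INR L ->
  E_delta (delta_qb q beta) G v (theta * L) < Rpower (INR (gn G)) C * g ^ (theta * L) ->
  forall w, is_saw G v (theta * L) w ->
  exists j : nat, (L < j <= theta * L)%nat /\ low_degree q beta G (nth j w 0%nat).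
Proof.
  intros Hq Hbeta Hpos HL Htheta Hg Hgt HCL HE w Hw. apply NNPP. intros Hnone.
  assert (Hlow := walk_weight_ge_min_pow q beta Hq Hbeta G v L theta w Hw ltac:(nia)
                    (fun j Hj Hj_low => Hnone (ex_intro _ j (conj Hj Hj_low)))).
  assert (Hup := walk_weight_le_E_delta _ G v _ w Hpos Hw ltac:(nia)).
  assert (Hgrowth := Rpower_mul_pow_le _ _ _ _ theta L HCL Hg Hgt).
  lra.
Qed.

(* A node of the self-avoiding walk tree is represented by its walk [s], at depth
   [length s - 1]. *)
Lemma low_degree_cut_set q beta G v L theta :
  (forall w, is_saw G v (theta * L) w ->
     exists j : nat, (L < j <= theta * L)%nat /\ low_degree q beta G (nth j w 0%nat)) ->
  exists S : list nat -> Prop,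
    (forall s, S s ->
       (L < length s - 1 <= theta * L)%nat /\
       is_saw G v (length s - 1) s /\
       low_degree q beta G (last s 0%nat)) /\
    (forall w : list nat, is_saw G v (theta * L) w -> exists k : nat, S (firstn k w)).
Proof.
  intros Hwindow.
  exists (fun s => (L < length s - 1 <= theta * L)%nat /\ is_saw G v (length s - 1) s /\
                low_degree q beta G (last s 0%nat)).
  split; [auto|].
  intros w Hw. destruct (Hwindow w Hw) as (j & Hj & Hj_low). exists (S j).
  pose proof Hw as (_ & _ & Hl & _ & _).
  rewrite length_firstn, Nat.min_l by lia. replace (S j - 1)%nat with j by lia.
  split; [lia|]. split.
  - apply (is_saw_firstn G v (theta * L)); [exact Hw | lia].
  - rewrite last_firstn_S by lia. exact Hj_low.
Qed.

Theorem mainTheorem10 (q : nat) (beta : R) (F : graph -> Prop) :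
  (3 <= q)%nat -> 0 <= beta < 1 ->
  contraction_function F (delta_qb q beta) ->
  exists theta : nat, (2 <= theta)%nat /\
  exists C : R, 0 < C /\
  forall G : graph, F G ->
  forall v : nat, (v < gn G)%nat ->
  forall L : nat, (1 <= L)%nat -> C * ln (INR (gn G)) <= INR L ->
    (forall w : list nat, is_saw G v (theta * L) w ->
       exists j : nat, (L < j <= theta * L)%nat /\
         low_degree q beta G (nth j w 0%nat)) /\
    (exists S : list nat -> Prop,
       (forall s, S s ->
          (L < length s - 1 <= theta * L)%nat /\
          is_saw G v (length s - 1) s /\
          low_degree q beta G (last s 0%nat)) /\
       (forall w : list nat, is_saw G v (theta * L) w ->
          exists k : nat, S (firstn k w))).
Proof.
  intros Hq Hbeta [Hpos (C & g & HC & Hg & HE)].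
  assert (Hb : 0 < delta_min q beta / exp 1).
  { apply Rdiv_lt_0_compat; [apply delta_min_pos | apply exp_pos]; assumption. }
  destruct (exists_pow_le g _ ltac:(lra) Hb) as (theta & Htheta & Hgt).
  exists theta. split; [exact Htheta|]. exists C. split; [exact HC|].
  intros G HG v Hv L HL HCL.
  assert (HthetaL : (1 <= theta * L)%nat) by nia.
  assert (Hwindow := low_degree_in_window q beta C g theta G v L Hq Hbeta Hpos HL
                       ltac:(lia) ltac:(lra) Hgt HCL (HE G HG v Hv _ HthetaL)).
  split; [exact Hwindow|].
  exact (low_degree_cut_set q beta G v L theta Hwindow).
Qed.
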